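(* Let $q$ be a prime power and $r\ge1$ an integer, and let $\mathcal{F}(q,r)$ be the largest integer $n$ that is not the cardinality of a $q^r$-divisible set of points in $\mathrm{PG}(v-1,q)$ for any $v\ge1$. Then $\mathcal{F}(q,r)$ is well defined and $$\mathcal{F}(q,r)\le \frac{q^{r+1}-1}{q-1}\cdot q^{r+1}-\frac{q^{r+1}-1}{q-1}-q^{r+1}=q^{2r+1}+q^{2r}+\dots+q^{r+2}-q^r-q^{r-1}-\dots-1.$$ In other words, every integer $n$ larger than this bound is the cardinality of some $q^r$-divisible set of points in some projective space over $\mathbb{F}_q$.
   Context: $\mathrm{PG}(v-1,q)$ is the set of $1$-dimensional subspaces (points) of $\mathbb{F}_q^v$; hyperplanes are $(v-1)$-dimensional subspaces. A set $\mathcal{C}$ of points is $\Delta$-divisible if there is an integer $u$ with $|\mathcal{C}\cap H|\equiv u\pmod{\Delta}$ for every hyperplane $H$, where $\mathcal{C}\cap H$ is the set of points of $\mathcal{C}$ contained in $H$. *)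

From mathcomp Require Import all_boot all_order all_algebra.
Set Implicit Arguments. Unset Strict Implicit. Unset Printing Implicit Defensive.
Import GRing.Theory.
Local Open Scope ring_scope.

(* PG(v-1, F): points are the 1-dimensional subspaces of F^v = 'rV[F]_v,
   hyperplanes are the (v-1)-dimensional subspaces. *)
Definition is_point (F : finFieldType) (v : nat) (P : {vspace 'rV[F]_v}) : bool :=
  \dim P == 1%N.

Definition is_hyperplane (F : finFieldType) (v : nat) (H : {vspace 'rV[F]_v}) : bool :=
  \dim H == v.-1.

Definition point_set (F : finFieldType) (v : nat) (C : seq {vspace 'rV[F]_v}) : Prop :=
  uniq C /\ all (@is_point F v) C.

Definition card_cap (F : finFieldType) (v : nat) (C : seq {vspace 'rV[F]_v})
  (H : {vspace 'rV[F]_v}) : nat :=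
  count (fun P => (P <= H)%VS) C.

Definition divisible (F : finFieldType) (v : nat) (Delta : nat)
  (C : seq {vspace 'rV[F]_v}) : Prop :=
  exists u : int, forall H : {vspace 'rV[F]_v}, is_hyperplane H ->
    ((card_cap C H)%:Z = u %[mod Delta%:Z])%Z.

Definition realizable (F : finFieldType) (Delta n : nat) : Prop :=
  exists v : nat, (1 <= v)%N /\
    exists C : seq {vspace 'rV[F]_v},
      point_set C /\ size C = n /\ divisible Delta C.

(* Write [k]_q = 1 + q + ... + q^(k-1), the number of points of a k-dimensional
   subspace.  The points of an (r+1)-dimensional subspace, a copy of PG(r,q), form a
   q^r-divisible set of size [r+1]_q: a hyperplane meets it in [r]_q or
   [r+1]_q = [r]_q + q^r points.  The points of an (r+2)-dimensional subspace off one
   of its hyperplanes, a copy of AG(r+1,q), form a q^r-divisible set of size q^(r+1):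
   a hyperplane meets it in 0, q^r or q^(r+1) points.  Putting x copies of the first
   and y copies of the second on disjoint sets of coordinates realizes
   x [r+1]_q + y q^(r+1), and since [r+1]_q and q^(r+1) are coprime, every
   n > [r+1]_q q^(r+1) - [r+1]_q - q^(r+1) has this form (Sylvester).  Points are
   counted through their nonzero vectors, q - 1 on each.  Conversely no set of two
   points is q^r-divisible, so the largest non-realizable size exists. *)

From mathcomp Require Import all_boot all_order all_algebra finfield zify ring.
Set Implicit Arguments.
Unset Strict Implicit.
Unset Printing Implicit Defensive.
Import GRing.Theory Num.Theory.
Local Open Scope ring_scope.

Definition qint (q k : nat) : nat := (\sum_(i < k) q ^ i)%N.

Lemma qint0 q : qint q 0 = 0%N.
Proof. exact: big_ord0. Qed.

Lemma qintS q k : qint q k.+1 = (qint q k + q ^ k)%N.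
Proof. by rewrite /qint big_ord_recr. Qed.

Lemma qintSl q k : qint q k.+1 = (1 + q * qint q k)%N.
Proof.
rewrite /qint big_ord_recl big_distrr; congr (_ + _)%N.
by apply: eq_bigr => i _; rewrite expnS.
Qed.

Lemma qint_divE q k : (1 < q)%N -> ((q ^ k - 1) %/ (q - 1))%N = qint q k.
Proof. by move=> q_gt1; rewrite !subn1 predn_exp mulKn // -subn1 subn_gt0. Qed.

Lemma subn_exp_qint q a b : (0 < q)%N -> (b <= a)%N ->
  (q ^ a - q ^ b = q.-1 * (qint q a - qint q b))%N.
Proof.
move=> q_gt0 ba; rewrite mulnBr -!predn_exp.
by have := expn_gt0 q b; rewrite q_gt0 => /= ?; lia.
Qed.

Lemma coprime_qint_expn q k l : (1 < q)%N -> coprime (qint q k.+1) (q ^ l).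
Proof.
move=> q_gt1; apply: coprimeXr; rewrite -coprime_modl qintSl addnC mulnC modnMDl.
by rewrite modn_small ?coprime1n.
Qed.

Lemma frobenius_coin (a b n : nat) : (0 < a)%N -> (0 < b)%N -> coprime a b ->
  (a * b < n + a + b)%N -> exists x y, n = (x * a + y * b)%N.
Proof.
move=> a_gt0 b_gt0 coab ab_lt.
have [u [w uw1]] := Bezoutz a b; rewrite /gcdz /= (eqP coab) in uw1.
(* x = n u mod b solves x a = n mod b, and then y b = n - x a > -b forces y >= 0. *)
pose x := (n%:Z * u %% b)%Z; pose k := (n%:Z * u %/ b)%Z; pose y := n%:Z * w + k * a.
have x_ge0 : 0 <= x by rewrite modz_ge0 // eqz_nat -lt0n.
have x_lt : x < b by rewrite ltz_pmod // ltz_nat.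
have xy_n : x * a + y * b = n.
  have nu : n%:Z * u = k * b + x by rewrite [LHS](divz_eq _ b).
  have -> : x = n%:Z * u - k * b by rewrite nu addrC addKr.
  by rewrite /y; transitivity (n%:Z * (u * a + w * b)); [ring | rewrite uw1 mulr1].
have y_ge0 : 0 <= y by nia.
exists `|x|%N, `|y|%N; apply/eqP; rewrite -eqz_nat PoszD !PoszM !gez0_abs //.
exact/eqP.
Qed.

Lemma size_undup_uniform (T : eqType) (s : seq T) k :
  {in s, forall z, count_mem z s = k} -> (size (undup s) * k)%N = size s.
Proof.
move=> cnt; rewrite -[RHS](perm_size (perm_count_undup s)) size_flatten /shape.
rewrite -map_comp sumnE big_map big_seq (eq_bigr (fun=> k)) => [|z]; last first.
  by rewrite mem_undup /= size_nseq => /cnt.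
by rewrite -big_seq big_const_seq count_predT iter_addn_0 mulnC.
Qed.

Lemma count_enum_set (T : finType) (S : {set T}) (p : pred T) :
  count p (enum S) = #|S :&: [set z | p z]|.
Proof.
rewrite -size_filter cardE (perm_size (enum_setI _ _)).
by congr size; apply: eq_filter => z; rewrite inE.
Qed.

Section Projective.
Variables (F : finFieldType) (v : nat).
Local Notation V := 'rV[F]_v.
Local Notation q := #|F|.

Lemma q_gt1 : (1 < q)%N. Proof. exact: finNzRing_gt1. Qed.

Lemma dim_rV : \dim (fullv : {vspace V}) = v.
Proof. by rewrite dimvf dim_matrix mul1r. Qed.

Lemma dim1_vline (P : {vspace V}) z : \dim P = 1%N -> z \in P -> z != 0 -> <[z]>%VS = P.
Proof. by move=> dP zP z_nz; apply/eqP; rewrite eqEdim -memvE zP dim_vline z_nz dP. Qed.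

Lemma capv_vline0 (U : {vspace V}) z : z \notin U -> (U :&: <[z]> = 0)%VS.
Proof.
move=> zU; apply/eqP; rewrite -subv0; apply/subvP => y; rewrite memv_cap memv0.
case/andP => yU /vlineP [c yE]; move: yU; rewrite yE rpredZeq (negbTE zU) orbF.
by move/eqP ->; rewrite scale0r.
Qed.

Lemma hyperplane_avoiding (U : {vspace V}) z : z \notin U ->
  exists H : {vspace V}, [/\ \dim H = v.-1, (U <= H)%VS & z \notin H].
Proof.
(* H + <[z]> = W + W^C is the whole space, with W = U + <[z]>. *)
move=> zU; pose W := (U + <[z]>)%VS; exists (U + W^C)%VS.
have zW : z \in W by rewrite memvE addvSr.
have zH : z \notin (U + W^C)%VS.
  apply/memv_addP => -[u uU [c cW zE]].
  have : c \in (W :&: W^C)%VS.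
    rewrite memv_cap cW andbT (_ : c = z - u); last by rewrite zE addrC addKr.
    by rewrite rpredB // (subvP (addvSl U <[z]>)).
  by rewrite capv_compl memv0 => /eqP c0; rewrite zE c0 addr0 uU in zU.
split=> //; last exact: addvSl.
have z_nz : z != 0 by apply: contraNneq zU => ->; rewrite mem0v.
have := dimv_disjoint_sum (capv_vline0 zH).
rewrite -addvA [(W^C + _)%VS]addvC addvA -/W addv_complf dim_rV.
by rewrite dim_vline z_nz addn1 => dimE; rewrite [in RHS]dimE.
Qed.

Lemma two_points_not_divisible (Delta : nat) (C : seq {vspace V}) :
  (1 < Delta)%N -> point_set C -> size C = 2%N -> ~ divisible Delta C.
Proof.
case: C => [|P1 [|P2 []]] // Delta_gt1 [/= /andP [P12 _]].
move=> /and3P [/eqP dP1 /eqP dP2 _] _ [u Hu].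
pose z1 := vpick P1; pose z2 := vpick P2.
have z_nz (P : {vspace V}) : \dim P = 1%N -> vpick P != 0.
  by move=> dP; rewrite vpick0 -dimv_eq0 dP.
have P1E := dim1_vline dP1 (memv_pick P1) (z_nz _ dP1).
have P2E := dim1_vline dP2 (memv_pick P2) (z_nz _ dP2).
have z2P1 : z2 \notin P1.
  apply: contra P12 => z2P1; rewrite inE eq_sym -P2E; apply/eqP.
  by apply: dim1_vline; rewrite ?memv_pick ?z_nz.
have z1L : z1 \notin <[z1 + z2]>%VS.
  apply: contra z2P1 => z1L; rewrite -P1E.
  have -> : <[z1]>%VS = <[z1 + z2]>%VS.
    by apply/eqP; rewrite eqEdim -memvE z1L !dim_vline z_nz // leq_b1.
  by rewrite -{1}[z2](addKr z1) rpredD ?rpredN ?memv_line.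
(* H1 contains P1 but not P2; H0 contains z1 + z2 but not z1, hence not z2 either. *)
have [H1 [dH1 P1H1 z2H1]] := hyperplane_avoiding z2P1.
have [H0 [dH0 LH0 z1H0]] := hyperplane_avoiding z1L.
have z2H0 : z2 \notin H0.
  apply: contra z1H0 => z2H0.
  by rewrite -[z1](addrK z2) rpredB // memvE.
have := Hu H1; have := Hu H0; rewrite /is_hyperplane /card_cap /= dH0 dH1 eqxx P1H1.
rewrite -P1E -P2E -!memvE (negbTE z1H0) (negbTE z2H0) (negbTE z2H1).
move=> /(_ isT) <- /(_ isT); rewrite !modz_nat => -[].
by rewrite mod0n modn_small.
Qed.

Definition lines (S : {set V}) : seq {vspace V} := undup [seq <[z]>%VS | z : V in S].

Definition cone (S : {set V}) : Prop :=
  0 \notin S /\ forall (c : F) z, c != 0 -> z \in S -> c *: z \in S.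

Definition vdiff (A B : {vspace V}) : {set V} := [set z in A] :\: [set z in B].

Lemma lines_point_set (S : {set V}) : 0 \notin S -> point_set (lines S).
Proof.
move=> S0; split; first exact: undup_uniq.
apply/allP => P; rewrite mem_undup => /imageP [z zS ->].
have z_nz : z != 0 by apply: contraNneq S0 => <-.
by rewrite /is_point dim_vline z_nz.
Qed.

Lemma card_cap_lines (S : {set V}) (H : {vspace V}) :
  card_cap (lines S) H = size (lines (S :&: [set z in H])).
Proof.
rewrite /card_cap /lines -size_filter filter_undup filter_map.
apply/perm_size/perm_undup/perm_mem; rewrite perm_sym perm_map //.
rewrite (permPl (enum_setI _ _)); apply/permP => p; congr count.
by apply: eq_filter => z; rewrite inE memvE.
Qed.

Lemma card_vdiff (A B : {vspace V}) : (B <= A)%VS ->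
  #|vdiff A B| = (q ^ \dim A - q ^ \dim B)%N.
Proof.
move=> BA; rewrite cardsD (setIidPr _) ?cardsE ?card_vspace //.
by apply/subsetP => z; rewrite !inE; apply: subvP.
Qed.

Lemma vdiff_capv (A B H : {vspace V}) :
  vdiff A B :&: [set z in H] = vdiff (A :&: H) (B :&: H).
Proof.
by apply/setP => z; rewrite !inE !memv_cap; case: (z \in H); rewrite ?andbF ?andbT.
Qed.

Lemma cone_vdiff (A B : {vspace V}) : cone (vdiff A B).
Proof.
split=> [|c z c_nz]; first by rewrite !inE mem0v.
by rewrite !inE !rpredZeq (negbTE c_nz).
Qed.

Lemma cone_bigcup (I : finType) (S : I -> {set V}) :
  (forall i, cone (S i)) -> cone (\bigcup_i S i).
Proof.
move=> coneS; split=> [|c z c_nz /bigcupP [i _ zS]].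
  by apply/bigcupP => -[i _]; apply/negP; case: (coneS i).
by apply/bigcupP; exists i => //; case: (coneS i) => _; apply.
Qed.

Lemma size_lines (S : {set V}) : cone S -> (size (lines S) * q.-1)%N = #|S|.
Proof.
case=> S0 SZ; rewrite cardE -(size_map (fun z => <[z]>%VS)).
apply: size_undup_uniform => _ /mapP [z0 z0S ->].
have z0_nz : z0 != 0 by apply: contraNneq S0 => <-; rewrite -mem_enum.
have -> : q.-1 = (q ^ \dim <[z0]> - q ^ \dim (0 : {vspace V}))%N.
  by rewrite dim_vline z0_nz dimv0 subn1.
rewrite count_map count_enum_set -card_vdiff ?sub0v //.
apply: eq_card => z; rewrite !inE memv0 /=.
apply/andP/andP => [[zS /eqP <-] | [z_nz /vlineP [c zE]]].
  by split; [apply: contraNneq S0 => <- | exact: memv_line].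
have c_nz : c != 0 by apply: contraNneq z_nz => c0; rewrite zE c0 scale0r.
split; first by rewrite zE SZ // -mem_enum.
apply/eqP/dim1_vline => //; first by rewrite dim_vline z0_nz.
by rewrite zE memvZ ?memv_line.
Qed.

Lemma dimv_cap_nested (A B W : {vspace V}) : (B <= A)%VS ->
  (\dim (A :&: W) + \dim B <= \dim (B :&: W) + \dim A)%N.
Proof.
move=> BA; rewrite -dimv_sum_cap -capvA [(W :&: B)%VS]capvC capvA (capv_idPr BA).
by rewrite addnC leq_add2l dimvS // subv_add capvSl.
Qed.

Lemma dimv_cap_hyperplane (U H : {vspace V}) : \dim H = v.-1 ->
  (\dim U <= (\dim (U :&: H)).+1)%N.
Proof.
move=> dH; have := dimv_cap_nested U (subvf H); rewrite capfv capvC dH dim_rV.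
by have := dimvS (subvf U); rewrite dim_rV; lia.
Qed.

Lemma qint_cap_hyperplane (U H : {vspace V}) k : \dim H = v.-1 -> \dim U = k.+1 ->
  qint q (\dim (U :&: H)) = qint q k %[mod q ^ k].
Proof.
move=> dH dU; have := dimv_cap_hyperplane U dH; have := dimvS (capvSl U H).
rewrite dU; set d := \dim _ => d_le d_ge.
have [->|->] : d = k \/ d = k.+1 by lia.
  by [].
by rewrite qintS modnDr.
Qed.

Lemma qint_vdiff_hyperplane (A B H : {vspace V}) k : \dim H = v.-1 -> (B <= A)%VS ->
  \dim B = k.+1 -> \dim A = k.+2 ->
  (q ^ k %| qint q (\dim (A :&: H)) - qint q (\dim (B :&: H)))%N.
Proof.
move=> dH BA dB dA; have := dimv_cap_nested H BA; have := dimv_cap_hyperplane B dH.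
have := dimvS (capvS BA (subvv H)); rewrite dA dB.
set a := \dim (A :&: H); set b := \dim (B :&: H) => b_le_a b_ge a_le.
have [->|->] : a = b \/ a = b.+1 by lia.
  by rewrite subnn dvdn0.
by rewrite qintS addKn dvdn_exp2l //; lia.
Qed.

End Projective.

Section Blocks.
Variables (F : finFieldType) (v : nat) (I : finType) (A B : I -> {vspace 'rV[F]_v}).
Hypothesis BA : forall i, (B i <= A i)%VS.
Hypothesis A_ti : forall i j, i != j -> (A i :&: A j = 0)%VS.
Local Notation q := #|F|.

Definition block_lines := lines (\bigcup_i vdiff (A i) (B i)).

Lemma card_cap_block_lines H : card_cap block_lines H =
  (\sum_i (qint q (\dim (A i :&: H)) - qint q (\dim (B i :&: H))))%N.
Proof.
have q1_gt0 : (0 < q.-1)%N by rewrite -subn1 subn_gt0 q_gt1.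
have BA_H i : (B i :&: H <= A i :&: H)%VS by apply: capvS.
rewrite card_cap_lines.
have -> : (\bigcup_i vdiff (A i) (B i)) :&: [set z in H] =
           \bigcup_i vdiff (A i :&: H) (B i :&: H).
  apply/setP => z; rewrite in_setI; apply/andP/bigcupP => [[/bigcupP [i _ zi] zH] | [i _]].
    by exists i; rewrite // -vdiff_capv in_setI zi.
  by rewrite -vdiff_capv => /setIP [zi]; rewrite inE; split=> //; apply/bigcupP; exists i.
apply/eqP; rewrite -(eqn_pmul2r q1_gt0) size_lines; last first.
  by apply: cone_bigcup => i; apply: cone_vdiff.
rewrite -sum1_card partition_disjoint_bigcup => [|i j ij]; last first.
  rewrite -!vdiff_capv; apply: disjointWl (subsetIl _ _) _.
  apply: disjointWr (subsetIl _ _) _; rewrite -setI_eq0; apply/eqP/setP => z.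
  rewrite !inE; apply/negbTE/negP => /and3P [/andP [zBi zAi] _ zAj].
  have : z \in (A i :&: A j)%VS by rewrite memv_cap zAi.
  by rewrite A_ti // memv0 => /eqP z0; rewrite z0 mem0v in zBi.
rewrite big_distrl /=; apply/eqP/eq_bigr => i _.
by rewrite sum1_card card_vdiff // mulnC -subn_exp_qint ?dimvS // ltnW ?q_gt1.
Qed.

End Blocks.

Section Coordinates.
Variables (F : finFieldType) (T : finType).
Local Notation V := 'rV[F]_#|T|.

Definition coordv (J : {set T}) : {vspace V} :=
  lker (linfun (mulmxr (diag_mx (\row_k (enum_val k \notin J)%:R)))).

Lemma mem_coordv J z :
  (z \in coordv J) = [forall k, (enum_val k \notin J) ==> (z 0 k == 0)].
Proof.
rewrite memv_ker lfunE /= mul_mx_diag; apply/eqP/forallP => [/rowP zJ k | zJ].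
  by apply/implyP => kJ; have := zJ k; rewrite !mxE kJ mulr1 => ->.
apply/rowP => k; rewrite !mxE; have /implyP := zJ k.
by case: (enum_val k \notin J) => [/(_ isT)/eqP ->|_]; rewrite ?mul0r ?mulr0.
Qed.

Lemma card_coordv J : #|coordv J| = (#|F| ^ #|J|)%N.
Proof.
pose vec (f : {ffun T -> F}) : V := \row_k f (enum_val k).
have vec_inj : injective vec.
  move=> f g /rowP fg; apply/ffunP => t.
  by have := fg (enum_rank t); rewrite !mxE enum_rankK.
transitivity #|vec @: pffun_on (0 : F) J predT|; last by rewrite card_imset ?card_pffun_on.
apply: eq_card => z; rewrite mem_coordv.
apply/forallP/imsetP => [zJ | [f /pffun_onP [/supportP fJ _] ->] k]; last first.
  by apply/implyP => kJ; rewrite mxE fJ.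
exists [ffun t => z 0 (enum_rank t)]; last by apply/rowP => k; rewrite !mxE ffunE enum_valK.
apply/pffun_onP; split=> //; apply/supportP => t tJ; rewrite ffunE.
by have /implyP := zJ (enum_rank t); rewrite enum_rankK => /(_ tJ)/eqP.
Qed.

Lemma dim_coordv J : \dim (coordv J) = #|J|.
Proof. by apply/eqP; rewrite -(eqn_exp2l _ _ (q_gt1 F)) -card_coordv card_vspace. Qed.

Lemma coordvS (J K : {set T}) : J \subset K -> (coordv J <= coordv K)%VS.
Proof.
move=> JK; apply/subvP => z; rewrite !mem_coordv => /forallP zJ; apply/forallP => k.
by apply/implyP => kK; apply: (implyP (zJ k)); apply: contra kK; apply: (subsetP JK).
Qed.

Lemma coordv_disjoint (J K : {set T}) :
  [disjoint J & K] -> (coordv J :&: coordv K = 0)%VS.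
Proof.
move=> JK; apply/eqP; rewrite -subv0; apply/subvP => z.
rewrite memv_cap !mem_coordv memv0 => /andP [/forallP zJ /forallP zK].
apply/eqP/rowP => k; rewrite mxE; apply/eqP.
have [kJ|kJ] := boolP (enum_val k \in J); last exact: (implyP (zJ k)).
by apply: (implyP (zK k)); rewrite (disjointFr JK kJ).
Qed.

End Coordinates.

Lemma realizable0 (F : finFieldType) (Delta : nat) : realizable F Delta 0.
Proof. by exists 1%N; split=> //; exists [::]; do !split=> //; exists 0. Qed.

Section Construction.
Variables (F : finFieldType) (r x y : nat).
Local Notation q := #|F|.
Local Notation block := ('I_x + 'I_y)%type.
Local Notation T := (block * 'I_r.+2)%type.
Local Notation V := 'rV[F]_#|{: T}|.

(* Block [inl i] carries the points of an (r+1)-space, a copy of PG(r,q); block [inr j]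
   those of an (r+2)-space off one of its hyperplanes, a copy of AG(r+1,q). *)
Definition block_coords (b : block) (K : {set 'I_r.+2}) : {set T} := setX [set b] K.

Definition outer (b : block) : {vspace V} :=
  coordv F (block_coords b (if b is inl _ then [set~ ord_max] else setT)).

Definition inner (b : block) : {vspace V} :=
  if b is inl _ then 0%VS else coordv F (block_coords b [set~ ord_max]).

Lemma dim_block_coords b K : \dim (coordv F (block_coords b K)) = #|K|.
Proof. by rewrite dim_coordv cardsX cards1 mul1n. Qed.

Lemma dim_outer b : \dim (outer b) = if b is inl _ then r.+1 else r.+2.
Proof. by case: b => b; rewrite /outer dim_block_coords ?cardsC1 ?cardsT ?card_ord. Qed.

Lemma dim_inner b : \dim (inner b) = if b is inl _ then 0%N else r.+1.
Proof. by case: b => b; rewrite /inner ?dimv0 ?dim_block_coords ?cardsC1 ?card_ord. Qed.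

Lemma inner_sub b : (inner b <= outer b)%VS.
Proof. by case: b => b; rewrite ?sub0v // coordvS // setXS ?subsetT. Qed.

Lemma outer_ti b c : b != c -> (outer b :&: outer c = 0)%VS.
Proof.
move=> bc; apply: coordv_disjoint; rewrite -setI_eq0; apply/eqP/setP => -[d k].
rewrite !inE /=; apply/negbTE; apply: contra bc.
by case/andP => /andP [/eqP -> _] /andP [/eqP -> _].
Qed.

Definition pg_ag_union := block_lines outer inner.

Lemma pg_ag_union_point_set : point_set pg_ag_union.
Proof.
apply: lines_point_set.
by case: (cone_bigcup (fun b => cone_vdiff (outer b) (inner b))).
Qed.

Lemma size_pg_ag_union : size pg_ag_union = (x * qint q r.+1 + y * q ^ r.+1)%N.
Proof.
have := card_cap_block_lines inner_sub outer_ti fullv.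
rewrite /card_cap (eq_count (fun P => subvf P)) count_predT => ->.
rewrite big_sumType; congr (_ + _)%N.
  under eq_bigr do rewrite !capvf dim_outer dim_inner qint0 subn0.
  by rewrite sum_nat_const card_ord.
under eq_bigr do rewrite !capvf dim_outer dim_inner qintS addKn.
by rewrite sum_nat_const card_ord.
Qed.

Lemma divisible_pg_ag_union : divisible (q ^ r) pg_ag_union.
Proof.
exists (x * qint q r)%N => H /eqP dH; rewrite !modz_nat; congr Posz.
rewrite (card_cap_block_lines inner_sub outer_ti) big_sumType -modnDm.
rewrite [X in (_ + X)%N](eqP (_ : q ^ r %| _)%N); last first.
  apply: dvdn_sum => i _; apply: qint_vdiff_hyperplane dH (inner_sub _) _ _.
    exact: dim_inner.
  exact: dim_outer.
rewrite addn0 modn_mod -modn_summ.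
under eq_bigr do
  rewrite cap0v dimv0 qint0 subn0 (qint_cap_hyperplane dH (dim_outer (inl _))).
by rewrite sum_nat_const card_ord modnMmr.
Qed.

Lemma realizable_qint_expn_comb : realizable F (q ^ r) (x * qint q r.+1 + y * q ^ r.+1).
Proof.
have [xy0 | xy_gt0] := posnP (x + y).
  by move/eqP: xy0; rewrite addn_eq0 => /andP [/eqP -> /eqP ->]; apply: realizable0.
exists #|{: T}|; split; first by rewrite card_prod card_sum !card_ord muln_gt0 xy_gt0.
exists pg_ag_union; split; first exact: pg_ag_union_point_set.
by split; [exact: size_pg_ag_union | exact: divisible_pg_ag_union].
Qed.

End Construction.

Theorem lemma2p8 (F : finFieldType) (r : nat) (hr : (1 <= r)%N) :
  let q := #|F| in
  let bound : int :=
    (((q ^ r.+1 - 1) %/ (q - 1)) * q ^ r.+1)%N%:Z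
    - ((q ^ r.+1 - 1) %/ (q - 1))%N%:Z - (q ^ r.+1)%N%:Z in
  (exists n : nat, ~ realizable F (q ^ r) n) /\
  (forall n : nat, bound < n%:Z -> realizable F (q ^ r) n).
Proof.
move=> q bound; have q_gt1 : (1 < q)%N := q_gt1 F.
split.
  exists 2%N => -[v [_ [C [C_pts [C_size C_div]]]]].
  apply: two_points_not_divisible C_pts C_size C_div.
  by rewrite -(exp1n r) ltn_exp2r.
move=> n; rewrite /bound qint_divE // => n_gt.
have [x [y ->]] : exists x y, n = (x * qint q r.+1 + y * q ^ r.+1)%N.
  apply: frobenius_coin; first by rewrite qintSl.
  - by rewrite expn_gt0 ltnW.
  - exact: coprime_qint_expn.
  - by move: n_gt; lia.
exact: realizable_qint_expn_comb.
Qed.
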